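(* Let $\Sigma$ be a finite alphabet with $k=|\Sigma|$, and let $h:\Sigma\to\{1,\dots,k\}$ be a fixed bijection. Two NFAs $\mathcal{A}_1$ and $\mathcal{A}_2$ over $\Sigma$ are isomorphic if and only if the directed graphs $G_{\mathcal{A}_1}$ and $G_{\mathcal{A}_2}$ are isomorphic.
   Context: An NFA over $\Sigma$ is a tuple $(Q,\Sigma,\Delta,I,F)$ with $Q$ finite, $\Delta\subseteq Q\times\Sigma\times Q$, $I,F\subseteq Q$. Two NFAs are isomorphic if there is a bijection $\varphi$ between their state sets mapping initial states onto initial states, final states onto final states, and with $(p,a,q)\in\Delta_1\iff(\varphi(p),a,\varphi(q))\in\Delta_2$. For $\mathcal{A}=(Q,\Sigma,\Delta,I,F)$, the directed graph (loops allowed) $G_\mathcal{A}=(V,E)$ has as vertex set the disjoint union of: $Q$; $\Delta$ (each transition is a vertex); the vertices $(q,i)$ for $q\in I\setminus F$, $1\le i\le k+1$, for $q\in F\setminus I$, $1\le i\le k+2$, and for $q\in I\cap F$, $1\le i\le k+3$; and the vertices $(t,i)$ for $t=(p,a,q)\in\Delta$, $1\le i\le h(a)$. Its edges are: $(p,t)$ and $(t,q)$ for each $t=(p,a,q)\in\Delta$; $(t,(t,1))$ for each $t\in\Delta$; $((t,i),(t,j))$ for all $t=(p,a,q)\in\Delta$ and all $1\le i,j\le h(a)$; $((q,i),(q,j))$ for all $q\in I\cup F$ and all $i,j$ in the range given for $q$ above; and $(q,(q,1))$ for each $q\in I\cup F$. Two directed graphs are isomorphic if there is a bijection of vertex sets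 preserving edges in both directions. *)

From mathcomp Require Import all_boot.
Set Implicit Arguments. Unset Strict Implicit. Unset Printing Implicit Defensive.

Record nfa (Sigma Q : finType) := NFA {
  delta : {set Q * Sigma * Q};
  init  : {set Q};
  final : {set Q} }.

Definition nfa_iso (Sigma Q1 Q2 : finType) (A1 : nfa Sigma Q1) (A2 : nfa Sigma Q2) : Prop :=
  exists phi : Q1 -> Q2,
    [/\ bijective phi,
        (forall q, (q \in init A1) = (phi q \in init A2)),
        (forall q, (q \in final A1) = (phi q \in final A2)) &
        (forall p a q, ((p, a, q) \in delta A1) = ((phi p, a, phi q) \in delta A2))].

Record digraph := Digraph {
  amb : eqType;
  vert : pred amb;
  edge : rel amb }.
Arguments vert : clear implicits.
Arguments edge : clear implicits.

Definition digraph_iso (G1 G2 : digraph) : Prop :=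
  exists phi : amb G1 -> amb G2,
    [/\ (forall x, vert G1 x -> vert G2 (phi x)),
        {in vert G1 &, injective phi},
        (forall y, vert G2 y -> exists2 x, vert G1 x & phi x = y) &
        (forall x y, vert G1 x -> vert G1 y -> edge G1 x y = edge G2 (phi x) (phi y))].

Section GraphOfNFA.
Variables (Sigma Q : finType) (h : Sigma -> nat) (A : nfa Sigma Q).

(* ambient type: Q + Delta-candidates + (q,i) + (t,i) *)
Definition gvtx : eqType :=
  (Q + ((Q * Sigma * Q) + ((Q * nat) + ((Q * Sigma * Q) * nat))))%type.

Let k := #|Sigma|.

(* number of extra vertices (q,i) attached to a state q *)
Definition qbound (q : Q) : nat :=
  if q \in init A then (if q \in final A then k + 3 else k + 1)
  else (if q \in final A then k + 2 else 0).

Definition gvert (v : gvtx) : bool :=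
  match v with
  | inl _ => true
  | inr (inl t) => t \in delta A
  | inr (inr (inl (q, i))) => (1 <= i <= qbound q)
  | inr (inr (inr (t, i))) => (t \in delta A) && (1 <= i <= h t.1.2)
  end.

Definition gedge0 (v w : gvtx) : bool :=
  match v, w with
  (* (p, t) for t = (p,a,q) in Delta *)
  | inl p, inr (inl t) => (t \in delta A) && (t.1.1 == p)
  (* (t, q) for t = (p,a,q) in Delta *)
  | inr (inl t), inl q => (t \in delta A) && (t.2 == q)
  (* (t, (t,1)) *)
  | inr (inl t), inr (inr (inr (t', i))) => (t \in delta A) && (t' == t) && (i == 1)
  (* ((t,i),(t,j)) *)
  | inr (inr (inr (t, i))), inr (inr (inr (t', j))) =>
      [&& t \in delta A, t' == t, 1 <= i <= h t.1.2 & 1 <= j <= h t.1.2]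
  (* ((q,i),(q,j)) for q in I u F *)
  | inr (inr (inl (q, i))), inr (inr (inl (q', j))) =>
      [&& (q \in init A) || (q \in final A), q' == q,
          1 <= i <= qbound q & 1 <= j <= qbound q]
  (* (q, (q,1)) for q in I u F *)
  | inl q, inr (inr (inl (q', i))) =>
      [&& (q \in init A) || (q \in final A), q' == q & i == 1]
  | _, _ => false
  end.

Definition gedge (v w : gvtx) : bool := [&& gvert v, gvert w & gedge0 v w].

Definition graph_of_nfa : digraph := @Digraph gvtx gvert gedge.

End GraphOfNFA.

(* An NFA isomorphism acts on the vertices of G_A componentwise, so it is a
   graph isomorphism.  Conversely, the vertex classes of G_A are determined by
   the graph alone.  The gadget vertices (q,i) and (t,i) are exactly the
   vertices with a loop.  A state q is a loopless vertex whose only looped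
   out-neighbour is (q,1), which has at least k+1 out-neighbours, whereas the
   only looped out-neighbour (t,1) of a transition t = (p,a,q) has exactly
   h(a) <= k.  Hence a graph isomorphism maps states to states and transitions
   to transitions; the out-degree of (q,1) records whether q is initial and/or
   final, the edges p -> t -> q record the endpoints of t, and the out-degree
   h(a) of (t,1) records its letter since h is injective. *)

From mathcomp Require Import all_boot.
From mathcomp Require Import zify.
Set Implicit Arguments. Unset Strict Implicit. Unset Printing Implicit Defensive.

Definition outdeg_ge (G : digraph) (n : nat) (v : amb G) : Prop :=
  exists s : seq (amb G), [/\ uniq s, n <= size s & all (edge G v) s].
Arguments outdeg_ge : clear implicits.

Definition state_like (G : digraph) (k : nat) (v : amb G) : Prop :=
  ~~ edge G v v /\ forall w, edge G v w -> edge G w w -> outdeg_ge G k.+1 w.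
Arguments state_like : clear implicits.

Definition loop_nbr_ge (G : digraph) (n : nat) (v : amb G) : Prop :=
  exists w, [/\ edge G v w, edge G w w & outdeg_ge G n w].
Arguments loop_nbr_ge : clear implicits.

Lemma outdeg_geE (G : digraph) (v : amb G) (nbrs : seq (amb G)) n :
  uniq nbrs -> (forall w, edge G v w = (w \in nbrs)) ->
  outdeg_ge G n v <-> n <= size nbrs.
Proof.
move=> uniq_nbrs nbrsE; split.
- case=> s [uniq_s le_ns /allP s_nbrs]; apply: leq_trans le_ns _.
  by apply: uniq_leq_size => // w /s_nbrs; rewrite nbrsE.
- by move=> le_n; exists nbrs; split => //; apply/allP => w; rewrite nbrsE.
Qed.

Lemma eqn_from_pos_lower_bounds a b :
  (forall n, 0 < n -> (n <= a <-> n <= b)) -> a = b.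
Proof.
move=> ab; apply/eqP; rewrite eqn_leq; apply/andP; split.
  by case: a ab => // a ab; apply/ab.
by case: b ab => // b ab; apply/ab.
Qed.

Section DigraphIso.
Variables (G1 G2 : digraph) (f : amb G1 -> amb G2).
Hypothesis f_inj : {in vert G1 &, injective f}.
Hypothesis f_onto : forall y, vert G2 y -> exists2 x, vert G1 x & f x = y.
Hypothesis f_edge : forall x y, vert G1 x -> vert G1 y ->
  edge G1 x y = edge G2 (f x) (f y).
Hypothesis edge_vert1 : forall x y, edge G1 x y -> vert G1 y.
Hypothesis edge_vert2 : forall x y, edge G2 x y -> vert G2 y.

Lemma iso_preimage_seq (s : seq (amb G2)) : all (vert G2) s ->
  exists2 s1, all (vert G1) s1 & map f s1 = s.
Proof.
elim: s => [|y s IHs] /=; first by exists [::].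
case/andP=> /f_onto[x vx <-] /IHs[s1 vs1 <-].
by exists (x :: s1); rewrite //= vx.
Qed.

Lemma iso_outdeg_ge n v : vert G1 v -> outdeg_ge G1 n v <-> outdeg_ge G2 n (f v).
Proof.
move=> vv; split.
- case=> s [uniq_s le_ns /allP s_nbrs].
  have vs x : x \in s -> vert G1 x by move/s_nbrs/edge_vert1.
  exists (map f s); split.
  + by rewrite map_inj_in_uniq // => x y /vs vx /vs vy; apply: f_inj.
  + by rewrite size_map.
  + by apply/allP => _ /mapP[x xs ->]; rewrite -f_edge ?s_nbrs ?(vs x).
- case=> s [uniq_s le_ns /allP s_nbrs].
  have [s1 /allP vs1 s1E] : exists2 s1, all (vert G1) s1 & map f s1 = s.
    by apply: iso_preimage_seq; apply/allP => y /s_nbrs/edge_vert2.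
  exists s1; split.
  + by apply: (@map_uniq _ _ f); rewrite s1E.
  + by rewrite -(size_map f) s1E.
  + apply/allP => x xs1; rewrite f_edge ?(vs1 x) //.
    by apply: s_nbrs; rewrite -s1E map_f.
Qed.

Lemma iso_state_like k v : vert G1 v -> state_like G1 k v <-> state_like G2 k (f v).
Proof.
move=> vv; rewrite /state_like f_edge //.
split=> -[noloop nbrs_ge]; split=> // w.
- move=> vw_edge w_loop; have [x vx fxw] := f_onto (edge_vert2 vw_edge).
  move: vw_edge w_loop; rewrite -fxw -!f_edge // => vx_edge x_loop.
  exact/iso_outdeg_ge/nbrs_ge.
- move=> vw_edge w_loop; have vw := edge_vert1 vw_edge.
  rewrite f_edge // in vw_edge; rewrite f_edge // in w_loop.
  exact/iso_outdeg_ge/nbrs_ge.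
Qed.

Lemma iso_loop_nbr_ge n v : vert G1 v -> loop_nbr_ge G1 n v <-> loop_nbr_ge G2 n (f v).
Proof.
move=> vv; split.
- case=> w [vw_edge w_loop w_ge]; have vw := edge_vert1 vw_edge.
  by exists (f w); rewrite -!f_edge //; split => //; apply/iso_outdeg_ge.
- case=> w [vw_edge w_loop w_ge]; have [x vx fxw] := f_onto (edge_vert2 vw_edge).
  move: vw_edge w_loop w_ge; rewrite -fxw => vw_edge w_loop w_ge.
  by exists x; rewrite !f_edge //; split => //; apply/iso_outdeg_ge.
Qed.

End DigraphIso.

Section GraphOfNFA.
Variables (Sigma Q : finType) (h : Sigma -> nat) (A : nfa Sigma Q).
Hypothesis h_range : forall a, 1 <= h a <= #|Sigma|.
Local Notation k := #|Sigma|.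
Local Notation G := (graph_of_nfa h A).

Definition state_gadget (q : Q) (i : nat) : gvtx Sigma Q := inr (inr (inl (q, i))).
Definition trans_gadget (t : Q * Sigma * Q) (i : nat) : gvtx Sigma Q :=
  inr (inr (inr (t, i))).

Definition state_vtx (v : gvtx Sigma Q) : bool :=
  if v is inl _ then true else false.

Definition gadget_vtx (v : gvtx Sigma Q) : bool :=
  if v is inr (inr _) then true else false.

Lemma gedge_vert v w : gedge h A v w -> gvert h A w.
Proof. by case/and3P. Qed.

Lemma qbound_gt0 q : (0 < qbound A q) = (q \in init A) || (q \in final A).
Proof. by rewrite /qbound; case: (q \in init A); case: (q \in final A) => /=; lia. Qed.

Lemma qbound_gtk q : (q \in init A) || (q \in final A) -> k < qbound A q.
Proof. by rewrite /qbound; case: (q \in init A); case: (q \in final A) => /=; lia. Qed.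

Lemma gedge_loop v : gvert h A v -> gedge h A v v = gadget_vtx v.
Proof.
case: v => [q|[t|[[q i]|[t i]]]] /= vv; rewrite /gedge /= ?eqxx ?andbF //.
- by case/andP: vv => i_gt0 i_le; rewrite i_gt0 i_le -qbound_gt0 /= !andbT; lia.
- by case/and3P: vv => -> -> ->.
Qed.

Lemma state_gadget_nbrs q : (q \in init A) || (q \in final A) ->
  forall w, gedge h A (state_gadget q 1) w =
            (w \in map (state_gadget q) (iota 1 (qbound A q))).
Proof.
move=> qIF w; have := qbound_gtk qIF.
case: w => [q'|[t|[[q' j]|[t j]]]] qb; rewrite /gedge /= ?andbF;
  try by apply/esym/mapP => -[? _].
apply/idP/mapP => [/and5P[_ _ _ /eqP-> /and3P[_ j_gt0 j_le]]|[j']].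
  by exists j; rewrite // mem_iota; lia.
by rewrite mem_iota => j'_in [-> ->]; rewrite eqxx qIF /=; lia.
Qed.

Lemma trans_gadget_nbrs t : t \in delta A ->
  forall w, gedge h A (trans_gadget t 1) w =
            (w \in map (trans_gadget t) (iota 1 (h t.1.2))).
Proof.
move=> tA w; have := h_range t.1.2.
case: w => [q'|[t'|[[q' j]|[t' j]]]] hr; rewrite /gedge /= ?andbF;
  try by apply/esym/mapP => -[? _].
apply/idP/mapP => [/and4P[_ _ _ /and4P[/eqP-> _ j_gt0 j_le]]|[j']].
  by exists j; rewrite // mem_iota; lia.
by rewrite mem_iota => j'_in [-> ->]; rewrite eqxx tA /=; lia.
Qed.

Lemma outdeg_state_gadget q n : (q \in init A) || (q \in final A) ->
  outdeg_ge G n (state_gadget q 1) <-> n <= qbound A q.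
Proof.
move=> qIF; rewrite (@outdeg_geE G _ _ _ _ (state_gadget_nbrs qIF)).
- by rewrite size_map size_iota.
- by rewrite map_inj_uniq ?iota_uniq // => i j [].
Qed.

Lemma outdeg_trans_gadget t n : t \in delta A ->
  outdeg_ge G n (trans_gadget t 1) <-> n <= h t.1.2.
Proof.
move=> tA; rewrite (@outdeg_geE G _ _ _ _ (trans_gadget_nbrs tA)).
- by rewrite size_map size_iota.
- by rewrite map_inj_uniq ?iota_uniq // => i j [].
Qed.

Lemma trans_edge_trans_gadget t : t \in delta A ->
  gedge h A (inr (inl t)) (trans_gadget t 1).
Proof.
by move=> tA; case/andP: (h_range t.1.2) => h_gt0 _; rewrite /gedge /= tA !eqxx h_gt0.
Qed.

Lemma trans_gadget_loop t : t \in delta A ->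
  gedge h A (trans_gadget t 1) (trans_gadget t 1).
Proof.
by move=> tA; case/andP: (h_range t.1.2) => h_gt0 _; rewrite gedge_loop //= tA h_gt0.
Qed.

Lemma trans_loop_nbr t w : gedge h A (inr (inl t)) w -> gedge h A w w ->
  w = trans_gadget t 1.
Proof.
move=> tw w_loop; rewrite gedge_loop ?(gedge_vert tw) // in w_loop.
case: w tw w_loop => [q'|[t'|[[q' j]|[t' j]]]] // /and3P[_ _] //=.
by case/andP=> /andP[_ /eqP->] /eqP->.
Qed.

Lemma state_loop_nbr q w : gedge h A (inl q) w -> gedge h A w w ->
  (q \in init A) || (q \in final A) /\ w = state_gadget q 1.
Proof.
move=> qw w_loop; rewrite gedge_loop ?(gedge_vert qw) // in w_loop.
case: w qw w_loop => [q'|[t'|[[q' j]|[t' j]]]] // /and3P[_ _] //=.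
by case/and3P=> -> /eqP-> /eqP->.
Qed.

Lemma state_likeE v : gvert h A v -> state_like G k v <-> state_vtx v.
Proof.
move=> vv; split=> [[noloop nbrs_ge]|]; last first.
  case: v vv => // q _ _; split=> [|w qw w_loop]; first by rewrite /gedge.
  by have [qIF ->] := state_loop_nbr qw w_loop; apply/outdeg_state_gadget/qbound_gtk.
case: v vv noloop nbrs_ge => [q|[t|w]] // vv noloop; last first.
  by rewrite /= gedge_loop in noloop.
move/(_ _ (trans_edge_trans_gadget vv) (trans_gadget_loop vv)).
by rewrite outdeg_trans_gadget // ltnNge; case/andP: (h_range t.1.2) => _ ->.
Qed.

Lemma loop_nbr_geE q n : 0 < n -> loop_nbr_ge G n (inl q) <-> n <= qbound A q.
Proof.
move=> n_gt0; split=> [[w [qw w_loop w_ge]]|n_le].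
  by have [qIF wE] := state_loop_nbr qw w_loop; rewrite wE outdeg_state_gadget in w_ge.
have qIF : (q \in init A) || (q \in final A) by rewrite -qbound_gt0; lia.
exists (state_gadget q 1); split; last exact/outdeg_state_gadget.
  by rewrite /= /gedge /= qIF !eqxx /= andbT; lia.
by rewrite /= gedge_loop //=; lia.
Qed.

End GraphOfNFA.

Lemma qbound_eq_init_final (Sigma Q1 Q2 : finType)
    (A1 : nfa Sigma Q1) (A2 : nfa Sigma Q2) q1 q2 :
  qbound A1 q1 = qbound A2 q2 ->
  (q1 \in init A1) = (q2 \in init A2) /\ (q1 \in final A1) = (q2 \in final A2).
Proof.
rewrite /qbound; case: (q1 \in init A1); case: (q1 \in final A1);
  case: (q2 \in init A2); case: (q2 \in final A2) => //=; lia.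
Qed.

Definition trans_map (Sigma Q1 Q2 : finType) (phi : Q1 -> Q2)
    (t : Q1 * Sigma * Q1) : Q2 * Sigma * Q2 :=
  (phi t.1.1, t.1.2, phi t.2).

Definition gvtx_map (Sigma Q1 Q2 : finType) (phi : Q1 -> Q2)
    (v : gvtx Sigma Q1) : gvtx Sigma Q2 :=
  match v with
  | inl q => inl (phi q)
  | inr (inl t) => inr (inl (trans_map phi t))
  | inr (inr (inl (q, i))) => inr (inr (inl (phi q, i)))
  | inr (inr (inr (t, i))) => inr (inr (inr (trans_map phi t, i)))
  end.

Lemma trans_map_inj (Sigma Q1 Q2 : finType) (phi : Q1 -> Q2) :
  injective phi -> injective (@trans_map Sigma _ _ phi).
Proof. by move=> phi_inj [[p a] q] [[p' a'] q'] [/phi_inj-> -> /phi_inj->]. Qed.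

Lemma trans_map_can (Sigma Q1 Q2 : finType) (phi : Q1 -> Q2) psi :
  cancel phi psi -> cancel (@trans_map Sigma _ _ phi) (trans_map psi).
Proof. by move=> phiK [[p a] q]; rewrite /trans_map /= !phiK. Qed.

Lemma gvtx_map_can (Sigma Q1 Q2 : finType) (phi : Q1 -> Q2) psi :
  cancel phi psi -> cancel (@gvtx_map Sigma _ _ phi) (gvtx_map psi).
Proof.
by move=> phiK [q|[t|[[q i]|[t i]]]] /=; rewrite ?phiK ?(trans_map_can phiK).
Qed.

Section NFAIsoGraphIso.
Variables (Sigma Q1 Q2 : finType) (h : Sigma -> nat).
Variables (A1 : nfa Sigma Q1) (A2 : nfa Sigma Q2) (phi : Q1 -> Q2).
Hypothesis phi_inj : injective phi.
Hypothesis phi_init : forall q, (q \in init A1) = (phi q \in init A2).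
Hypothesis phi_final : forall q, (q \in final A1) = (phi q \in final A2).
Hypothesis phi_delta : forall p a q,
  ((p, a, q) \in delta A1) = ((phi p, a, phi q) \in delta A2).

Lemma mem_delta_trans_map t : (trans_map phi t \in delta A2) = (t \in delta A1).
Proof. by case: t => [[p a] q]; rewrite phi_delta. Qed.

Lemma qbound_map q : qbound A2 (phi q) = qbound A1 q.
Proof. by rewrite /qbound -phi_init -phi_final. Qed.

Lemma gvert_map v : gvert h A2 (gvtx_map phi v) = gvert h A1 v.
Proof.
by case: v => [q|[t|[[q i]|[t i]]]] /=; rewrite ?mem_delta_trans_map ?qbound_map.
Qed.

Lemma gedge_map v w : gedge h A2 (gvtx_map phi v) (gvtx_map phi w) = gedge h A1 v w.
Proof.
have tphi_inj := @trans_map_inj Sigma _ _ _ phi_inj.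
rewrite /gedge !gvert_map; congr [&& _, _ & _].
case: v => [q|[t|[[q i]|[t i]]]]; case: w => [q'|[t'|[[q' j]|[t' j]]]] /=;
  by rewrite ?mem_delta_trans_map ?(inj_eq phi_inj) ?(inj_eq tphi_inj)
             ?qbound_map -?phi_init -?phi_final.
Qed.

End NFAIsoGraphIso.

Lemma nfa_iso_graph_iso (Sigma Q1 Q2 : finType) (h : Sigma -> nat)
    (A1 : nfa Sigma Q1) (A2 : nfa Sigma Q2) :
  nfa_iso A1 A2 -> digraph_iso (graph_of_nfa h A1) (graph_of_nfa h A2).
Proof.
case=> phi [[psi phiK psiK] phi_init phi_final phi_delta].
have phi_inj := can_inj phiK.
have gvertE := gvert_map h phi_init phi_final phi_delta.
exists (gvtx_map phi); split.
- by move=> x; rewrite /= gvertE.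
- by move=> x y _ _; apply: (can_inj (gvtx_map_can phiK)).
- move=> y vy; exists (gvtx_map psi y); last exact: gvtx_map_can.
  by rewrite /= -gvertE gvtx_map_can.
- by move=> x y _ _; rewrite /= (gedge_map h phi_inj phi_init phi_final phi_delta).
Qed.

Section GraphIsoNFAIso.
Variables (Sigma : finType) (h : Sigma -> nat).
Hypothesis h_range : forall a, 1 <= h a <= #|Sigma|.
Hypothesis h_inj : injective h.
Variables (Q1 Q2 : finType) (A1 : nfa Sigma Q1) (A2 : nfa Sigma Q2).
Local Notation G1 := (graph_of_nfa h A1).
Local Notation G2 := (graph_of_nfa h A2).
Variable f : gvtx Sigma Q1 -> gvtx Sigma Q2.
Hypothesis f_vert : forall x, gvert h A1 x -> gvert h A2 (f x).
Hypothesis f_inj : {in gvert h A1 &, injective f}.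
Hypothesis f_onto : forall y, gvert h A2 y -> exists2 x, gvert h A1 x & f x = y.
Hypothesis f_edge : forall x y, gvert h A1 x -> gvert h A1 y ->
  gedge h A1 x y = gedge h A2 (f x) (f y).

Let f_iso_outdeg_ge := @iso_outdeg_ge G1 G2 f f_inj f_onto f_edge
  (@gedge_vert _ _ h A1) (@gedge_vert _ _ h A2).
Let f_iso_state_like := @iso_state_like G1 G2 f f_inj f_onto f_edge
  (@gedge_vert _ _ h A1) (@gedge_vert _ _ h A2).
Let f_iso_loop_nbr_ge := @iso_loop_nbr_ge G1 G2 f f_inj f_onto f_edge
  (@gedge_vert _ _ h A1) (@gedge_vert _ _ h A2).

Lemma state_vtx_iso x : gvert h A1 x -> state_vtx (f x) = state_vtx x.
Proof.
move=> vx; apply/idP/idP => state_x.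
- apply/(state_likeE h_range vx)/(f_iso_state_like _ vx).
  exact/(state_likeE h_range (f_vert vx)).
- apply/(state_likeE h_range (f_vert vx))/(f_iso_state_like _ vx).
  exact/(state_likeE h_range vx).
Qed.

Lemma gadget_vtx_iso x : gvert h A1 x -> gadget_vtx (f x) = gadget_vtx x.
Proof. by move=> vx; rewrite -(gedge_loop (f_vert vx)) -f_edge // gedge_loop. Qed.

Lemma iso_maps_states : exists phi : Q1 -> Q2, forall q, f (inl q) = inl (phi q).
Proof.
apply: (@fin_all_exists _ (fun=> Q2) (fun q q2 => f (inl q) = inl q2)) => q.
have := state_vtx_iso (isT : gvert h A1 (inl q)).
by case: (f (inl q)) => // q2 _; exists q2.
Qed.

Variable phi : Q1 -> Q2.
Hypothesis f_state : forall q, f (inl q) = inl (phi q).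

Lemma phi_bij : bijective phi.
Proof.
have phi_inj : injective phi.
  move=> q q' eq_phi; have : inl q = inl q' :> gvtx Sigma Q1.
    by apply: f_inj; rewrite // !f_state eq_phi.
  by case.
have [psi phiK] : exists psi : Q2 -> Q1, cancel psi phi.
  apply: (@fin_all_exists _ (fun=> Q1) (fun q2 q1 => phi q1 = q2)) => q2.
  have [x vx fx] := f_onto (isT : gvert h A2 (inl q2)).
  case: x vx fx => [q1|v] vx fx.
    by exists q1; move: fx; rewrite f_state => -[].
  by move: (state_vtx_iso vx); rewrite fx.
by exists psi => // q; apply: phi_inj.
Qed.

Lemma qbound_phi q : qbound A2 (phi q) = qbound A1 q.
Proof.
apply: eqn_from_pos_lower_bounds => n n_gt0.
rewrite -(loop_nbr_geE h A1 q n_gt0) -(loop_nbr_geE h A2 (phi q) n_gt0) -f_state.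
by rewrite f_iso_loop_nbr_ge.
Qed.

Lemma iso_maps_transitions t : t \in delta A1 ->
  f (inr (inl t)) = inr (inl (trans_map phi t)).
Proof.
move=> tA1; set x : gvtx Sigma Q1 := inr (inl t).
have vx : gvert h A1 x by [].
have [t' t'A2 fx] : exists2 t', t' \in delta A2 & f x = inr (inl t').
  move: (f_vert vx) (state_vtx_iso vx) (gadget_vtx_iso vx).
  by case: (f x) => [q2|[t'|w]] //= t'A2 _ _; exists t'.
have src : t'.1.1 = phi t.1.1.
  have : gedge h A1 (inl t.1.1) x by rewrite /gedge /= tA1 eqxx.
  by rewrite f_edge // f_state fx /gedge /= t'A2 => /eqP.
have tgt : t'.2 = phi t.2.
  have : gedge h A1 x (inl t.2) by rewrite /gedge /= tA1 eqxx.
  by rewrite f_edge // f_state fx /gedge /= t'A2 => /eqP.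
have x_gadget := trans_edge_trans_gadget h_range tA1.
have v_gadget := gedge_vert x_gadget.
have gadget1 : f (trans_gadget t 1) = trans_gadget t' 1.
  rewrite f_edge // -/x fx in x_gadget; apply: trans_loop_nbr x_gadget _.
  by rewrite -f_edge // trans_gadget_loop.
have label : t'.1.2 = t.1.2.
  apply/h_inj/eqn_from_pos_lower_bounds => n _.
  rewrite -(outdeg_trans_gadget h_range n tA1) -(outdeg_trans_gadget h_range n t'A2).
  by rewrite -gadget1 f_iso_outdeg_ge.
by rewrite fx /trans_map -src -tgt -label -!surjective_pairing.
Qed.

Lemma mem_delta_phi p a q :
  ((p, a, q) \in delta A1) = ((phi p, a, phi q) \in delta A2).
Proof.
apply/idP/idP => [tA1 | tA2].
  have := f_vert (tA1 : gvert h A1 (inr (inl (p, a, q)))).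
  by rewrite iso_maps_transitions.
have [x vx fx] := f_onto (tA2 : gvert h A2 (inr (inl (phi p, a, phi q)))).
case: x vx fx => [q1|[t|w]] vx fx; first by rewrite f_state in fx.
  have [psi phiK _] := phi_bij.
  rewrite iso_maps_transitions // in fx.
  case: fx => /(can_inj phiK) src lbl /(can_inj phiK) tgt.
  by move: vx; rewrite /= -src -lbl -tgt -!surjective_pairing.
by move: (gadget_vtx_iso vx); rewrite fx.
Qed.

End GraphIsoNFAIso.

Unset Implicit Arguments.
Theorem proposition4 (Sigma : finType) (h : Sigma -> nat)
  (h_range : forall a, 1 <= h a <= #|Sigma|)
  (h_inj : injective h)
  (h_surj : forall n, 1 <= n <= #|Sigma| -> exists a, h a = n)
  (Q1 Q2 : finType) (A1 : nfa Sigma Q1) (A2 : nfa Sigma Q2) :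
  nfa_iso A1 A2 <-> digraph_iso (graph_of_nfa h A1) (graph_of_nfa h A2).
Proof.
split; first exact: nfa_iso_graph_iso.
case=> f [f_vert f_inj f_onto f_edge].
have [phi f_state] := iso_maps_states h_range f_vert f_inj f_onto f_edge.
have qbE q := qbound_phi f_inj f_onto f_edge f_state q.
exists phi; split.
- exact: (phi_bij h_range f_vert f_inj f_onto f_edge f_state).
- by move=> q; have [] := qbound_eq_init_final (qbE q).
- by move=> q; have [] := qbound_eq_init_final (qbE q).
- exact: (mem_delta_phi h_range h_inj f_vert f_inj f_onto f_edge f_state).
Qed.
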